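(* Let $q=2^n$ be such that $q-1$ is prime. Then there exists a linear $(q-3,q-1,q)$-AONT over $\mathbb{F}_q$, i.e. an invertible $(q-1)\times(q-1)$ matrix over $\mathbb{F}_q$ all of whose $(q-3)\times(q-3)$ submatrices are invertible.
   Context: A linear $(t,s,q)$-AONT over $\mathbb{F}_q$ is given by an invertible $s\times s$ matrix $M$ over $\mathbb{F}_q$ (transform $(y_1,\dots,y_s)=(x_1,\dots,x_s)M^{-1}$); $M$ defines a linear $(t,s,q)$-AONT iff every $t\times t$ submatrix of $M$ is invertible (a $0\times0$ submatrix counts as invertible). *)

From mathcomp Require Import all_boot all_order all_algebra all_field.
Set Implicit Arguments. Unset Strict Implicit. Unset Printing Implicit Defensive.
Import GRing.Theory.
Local Open Scope ring_scope.

(* The order of the chosen rows/columns only affects the sign of the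
   determinant, hence not invertibility.  For t = 0 the (unique) 0x0
   submatrix is invertible, matching the paper's convention. *)
Definition all_submx_invertible (F : fieldType) (t s : nat) (M : 'M[F]_s) :=
  forall (f g : 'I_t -> 'I_s), injective f -> injective g ->
    mxsub f g M \in unitmx.

Definition linear_AONT (F : fieldType) (t s : nat) (M : 'M[F]_s) :=
  M \in unitmx /\ all_submx_invertible t M.

From mathcomp Require Import all_boot all_order all_algebra all_field.
From mathcomp Require Import cyclic zify.
Set Implicit Arguments. Unset Strict Implicit. Unset Printing Implicit Defensive.
Import GRing.Theory.
Local Open Scope ring_scope.

(* Let z generate the multiplicative group of F, which has prime order
   s = q - 1, and let A = (z ^ (i j)) be the Fourier matrix of z.  A is a
   Vandermonde matrix, hence invertible, and its 2 x 2 minors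
   z ^ (ac + bd) - z ^ (ad + bc) vanish only if s divides (b - a)(d - c),
   which primality forbids.  Complementary minors then transfer this to
   M = A^-1: if v kills a (s-2) x (s-2) submatrix of M on rows f and columns g,
   then w = (v spread along f) M vanishes on g, so w lives on the two columns
   outside g, and w A, which vanishes outside f, says that this 2-vector is
   killed by the 2 x 2 block of A on the complements of g and f. *)

Lemma codom_compl_exists (t k s : nat) (f : 'I_t -> 'I_s) :
  (t + k = s)%N -> injective f ->
  exists2 h : 'I_k -> 'I_s, injective h &
    forall j, (j \in codom h) = (j \notin codom f).
Proof.
move=> tks injf; pose C := [predC codom f].
have card_compl : #|C| = k.
  apply/eqP; rewrite -(eqn_add2l t) tks -{1}[t]card_ord -(card_codom injf).
  by rewrite cardC card_ord.
exists (fun b => enum_val (cast_ord (esym card_compl) b)).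
  by move=> b c /enum_val_inj /cast_ord_inj.
move=> j; apply/codomP/idP => [[b ->]|Cj]; first exact: (enum_valP _ : _ \in C).
exists (cast_ord card_compl (enum_rank_in (Cj : j \in C) j)).
by rewrite cast_ordK enum_rankK_in.
Qed.

Section SubmatricesOfIdentity.

Variable R : pzSemiRingType.

Lemma mxsub1_inj (t s : nat) (f : 'I_t -> 'I_s) :
  injective f -> mxsub f f (1%:M : 'M[R]_s) = 1%:M.
Proof. by move=> injf; apply/matrixP => a b; rewrite !mxE (inj_eq injf). Qed.

Lemma mxsub1_disjoint (t k s : nat) (f : 'I_t -> 'I_s) (g : 'I_k -> 'I_s) :
  (forall a b, f a != g b) -> mxsub f g (1%:M : 'M[R]_s) = 0.
Proof. by move=> fg; apply/matrixP => a b; rewrite !mxE (negbTE (fg a b)). Qed.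

Lemma colsub_compl_mul_rowsub1 (m t k s : nat) (g : 'I_t -> 'I_s)
    (h : 'I_k -> 'I_s) (x : 'M[R]_(m, s)) :
  injective h -> (forall j, (j \in codom h) = (j \notin codom g)) ->
  colsub g x = 0 -> x = colsub h x *m rowsub h 1%:M.
Proof.
move=> injh hg xg0; apply/matrixP => i j; rewrite !mxE.
have [/codomP [b ->]|] := boolP (j \in codom h).
  rewrite (bigD1 b) //= big1 => [|c cb]; rewrite !mxE ?eqxx ?mulr1 ?addr0 //.
  by rewrite (inj_eq injh) (negbTE cb) mulr0.
rewrite hg negbK => /codomP [a ->].
have -> : x i (g a) = 0 by have := congr1 (fun y : 'M_(m, t) => y i a) xg0; rewrite !mxE.
rewrite big1 // => b _; rewrite !mxE; case: eqP => [hb|]; last by rewrite mulr0.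
by move: (codom_f h b); rewrite hg hb codom_f.
Qed.

End SubmatricesOfIdentity.

Lemma all_submx_invertible_invmx (F : fieldType) (t k s : nat) (A : 'M[F]_s) :
  (t + k = s)%N -> A \in unitmx -> all_submx_invertible k A ->
  all_submx_invertible t (invmx A).
Proof.
move=> tks Au Ak f g injf injg.
have [fc injfc fcE] := codom_compl_exists tks injf.
have [gc injgc gcE] := codom_compl_exists tks injg.
rewrite unitmxE unitfE; apply/negP => /det0P [v v0 vM].
set u := v *m rowsub f 1%:M; set w := u *m invmx A.
have wg0 : colsub g w = 0.
  by rewrite -vM [in RHS]mxsubcr mulmx_colsub /w /u -mulmxA mul_rowsub_mx mul1mx.
have w_spread := colsub_compl_mul_rowsub1 injgc gcE wg0.
have ufc0 : colsub fc u = 0.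
  rewrite -mulmx_colsub -mxsubcr mxsub1_disjoint ?mulmx0 // => a b.
  by apply: contraTneq (codom_f fc b) => <-; rewrite fcE codom_f.
have wgc0 : colsub gc w = 0.
  suff: colsub gc w *m mxsub gc fc A = 0.
    by move/(canRL (mulmxK (Ak gc fc injgc injfc))); rewrite mul0mx.
  have -> : mxsub gc fc A = rowsub gc 1%:M *m colsub fc A.
    by rewrite -mxsub_mul mul1mx.
  by rewrite mulmxA -w_spread mulmx_colsub /w mulmxKV.
have u0 : u = 0 by rewrite -[u](mulmxKV Au) -/w w_spread wgc0 !mul0mx.
case/eqP: v0; rewrite -[v]mulmx1 -(mxsub1_inj _ injf) -[1%:M]mul1mx mxsub_mul.
by rewrite mulmxA -/u u0 mul0mx.
Qed.

Lemma det_mx22 (R : comPzRingType) (A : 'M[R]_2) :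
  \det A = A 0 0 * A 1 1 - A 0 1 * A 1 0.
Proof.
rewrite (expand_det_row _ 0) !big_ord_recl big_ord0 addr0 /cofactor !det_mx11.
rewrite !mxE /= expr0 expr1 mul1r mulN1r mulrN.
by congr (A _ _ * A _ _ - A _ _ * A _ _); apply: val_inj.
Qed.

Lemma finField_prim_root_exists (F : finFieldType) :
  exists z : F, (#|F|.-1).-primitive_root z.
Proof.
have F_gt1 := card_finNzRing_gt1 F.
have /hasP [z _ zprim] : has (#|F|.-1).-primitive_root (enum (predC1 (0 : F))).
  apply: has_prim_root; rewrite ?enum_uniq -?cardE ?cardC1 -?subn1 ?subn_gt0 //.
  apply/allP => x; rewrite mem_enum unity_rootE => /= x0; apply/eqP.
  by apply: (mulIf x0); rewrite mul1r -exprSr subn1 prednK 1?ltnW // expf_card.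
by exists z.
Qed.

Definition fourier_mx (R : pzSemiRingType) (s : nat) (z : R) : 'M[R]_s :=
  \matrix_(i, j) z ^+ (i * j).

Lemma unitmx_fourier (F : fieldType) (s : nat) (z : F) :
  s.-primitive_root z -> fourier_mx s z \in unitmx.
Proof.
move=> zprim; have -> : fourier_mx s z = Vandermonde s (\row_(j < s) z ^+ j).
  by apply/matrixP => i j; rewrite !mxE -exprM mulnC.
rewrite unitmxE unitfE det_Vandermonde; apply/prodf_neq0 => i _.
apply/prodf_neq0 => j ij; rewrite !mxE subr_eq0 (eq_prim_root_expr zprim).
by rewrite !modn_small // gtn_eqF.
Qed.

Lemma prim_root_expr_cross_neq (R : nzRingType) (s : nat) (z : R) (a b c d : nat) :
  prime s -> s.-primitive_root z -> (a < s)%N -> (b < s)%N -> (c < s)%N ->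
  (d < s)%N -> a != b -> c != d -> z ^+ (a * c + b * d) != z ^+ (a * d + b * c).
Proof.
move=> s_pr zprim.
wlog ab : a b / (a < b)%N => [ab_case a_s b_s c_s d_s + cd_neq|].
  rewrite neq_ltn => /orP [ab|ba]; first by apply: ab_case; rewrite // ltn_eqF.
  rewrite eq_sym [(a * d + _)%N]addnC [(a * c + _)%N]addnC.
  by apply: ab_case; rewrite // ltn_eqF.
wlog cd : c d / (c < d)%N => [cd_case a_s b_s c_s d_s ab_neq|].
  rewrite neq_ltn => /orP [cd|dc]; first by apply: cd_case; rewrite // ltn_eqF.
  by rewrite eq_sym; apply: cd_case; rewrite // ltn_eqF.
move=> _ b_s _ d_s _ _.
have -> : (a * c + b * d = (a * d + b * c) + (b - a) * (d - c))%N by nia.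
rewrite (eq_prim_root_expr zprim) -[X in _ == X %[mod s]]addn0 eqn_modDl mod0n.
rewrite -/(dvdn s _) Euclid_dvdM // negb_or !gtnNdvd ?subn_gt0 //.
  exact: leq_ltn_trans (leq_subr _ _) d_s.
exact: leq_ltn_trans (leq_subr _ _) b_s.
Qed.

Lemma all_submx2_invertible_fourier (F : fieldType) (s : nat) (z : F) :
  prime s -> s.-primitive_root z -> all_submx_invertible 2 (fourier_mx s z).
Proof.
move=> s_pr zprim f g injf injg.
rewrite unitmxE unitfE det_mx22 !mxE subr_eq0 -!exprD.
by apply: (prim_root_expr_cross_neq s_pr zprim);
  rewrite ?ltn_ord // (inj_eq (@ord_inj _)) ?(inj_eq injf) ?(inj_eq injg).
Qed.

Theorem corollary2p28 (F : finFieldType) (n : nat) :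
  #|F| = (2 ^ n)%N -> prime (2 ^ n).-1 ->
  exists M : 'M[F]_((2 ^ n).-1), linear_AONT ((2 ^ n) - 3)%N M.
Proof.
move=> cardF s_pr; have [z] := finField_prim_root_exists F; rewrite cardF => zprim.
have A_unit := unitmx_fourier zprim.
exists (invmx (fourier_mx _ z)); split; first by rewrite unitmx_inv.
apply: all_submx_invertible_invmx (all_submx2_invertible_fourier s_pr zprim) => //.
by have := prime_gt1 s_pr; lia.
Qed.
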